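(* Let $n\ge 0$. The map $\mathrm{shift}$ restricts to bijections (1) from the set of feasible set partitions of $[n]$ onto the set of 2-regular set partitions $\Lambda$ of $[n+1]$ such that $1+\max B\neq \min B'$ for all blocks $B,B'\in\Lambda$; and (2) from the set of poor noncrossing set partitions of $[n]$ onto the set of 2-regular noncrossing set partitions of $[n+1]$.
   Context: A set partition is a set of nonempty pairwise disjoint finite sets of integers (blocks); it is a partition of $\mathcal X$ if the union of its blocks is $\mathcal X$; $[n]=\{1,\dots,n\}$. A pair $(i,j)$ is an arc of $\Lambda$ if $i<j$ lie in the same block and $j$ is the least element of that block greater than $i$; $\mathrm{Arc}(\Lambda)$ is the set of arcs, which together with the ground set determines $\Lambda$. $\Lambda$ is noncrossing if there are no arcs $(i,k),(j,l)$ with $i<j<k<l$. A partition is feasible if every block has at least two elements, poor if every block has at most two elements, and 2-regular if no block contains both $i$ and $i+1$ for any integer $i$. For a partition $\Lambda$ of $[n]$, $\mathrm{shift}(\Lambda)$ is the partition of $[n+1]$ with arc set $\{(i,j+1):(i,j)\in\mathrm{Arc}(\Lambda)\}$. *)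

From mathcomp Require Import all_boot.
Set Implicit Arguments. Unset Strict Implicit. Unset Printing Implicit Defensive.

(* Set partitions of finite sets of integers are encoded as finite sets of
   finite sets over an ordinal type 'I_N; an ordinal x stands for the
   integer [val x].  The ground set [n] = {1,...,n} lives in 'I_n.+1. *)

Definition ground (n : nat) : {set 'I_n.+1} := [set i : 'I_n.+1 | 0 < val i].

Section Partitions.
Variable N : nat.
Implicit Types (P : {set {set 'I_N}}) (B : {set 'I_N}).

Definition is_arc P (i j : nat) : bool :=
  [exists B in P, [exists x in B, [exists y in B,
     [&& val x == i, val y == j, i < j &
         [forall z in B, (i < val z) ==> (j <= val z)]]]]].

Definition noncrossing P : bool :=
  [forall i : 'I_N, forall j : 'I_N, forall k : 'I_N, forall l : 'I_N,
     ~~ [&& is_arc P i k, is_arc P j l, i < j, j < k & k < l]].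

Definition feasible P : bool := [forall B in P, 2 <= #|B|].

Definition poor P : bool := [forall B in P, #|B| <= 2].

Definition two_regular P : bool :=
  [forall B in P, forall x in B, forall y in B, val y != (val x).+1].

Definition max_min_sep P : bool :=
  [forall B in P, forall B' in P, forall x in B, forall y in B',
     ([forall z in B, val z <= val x] && [forall z in B', val y <= val z])
       ==> ((val x).+1 != val y)].

End Partitions.

(* shift(L): the partition of [n+1] whose arc set is {(i, j+1) : (i,j) in Arc(L)}.
   (Such a partition exists and is unique; we pick it, defaulting to set0.) *)
Definition shift (n : nat) (L : {set {set 'I_n.+1}}) : {set {set 'I_n.+2}} :=
  odflt set0 [pick Q : {set {set 'I_n.+2}} |
     partition Q (ground n.+1) &&
     [forall i : 'I_n.+2, forall j : 'I_n.+2,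
        is_arc Q i j == ((0 < val j) && is_arc L i (val j).-1)]].

Definition set_partitions (n : nat) : {set {set {set 'I_n.+1}}} :=
  [set L | partition L (ground n)].

From mathcomp Require Import all_boot zify.
Set Implicit Arguments. Unset Strict Implicit. Unset Printing Implicit Defensive.

(* A set partition of a set [X] is determined by its arcs, and a set of pairs
   [i < j] is the arc set of some partition of [X] iff it is a partial
   injection with endpoints in [X]: the blocks are the chains of arcs.  Hence
   [shift] is injective, and its image is the set of partitions of [n+1]
   without an arc [(i, i+1)], i.e. the 2-regular ones.  The remaining
   conditions translate along the shift: [L] is feasible iff every element is
   an endpoint of an arc, which in [shift L] says that no block maximum [x] is
   followed by a block minimum [x+1]; [L] is poor iff no two arcs [(i, j)] and
   [(j, k)] meet, and such a pair becomes the crossing pair [(i, j+1)],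
   [(j, k+1)]. *)

Section Arcs.
Variable N : nat.
Implicit Types (P : {set {set 'I_N}}) (B : {set 'I_N}).

Lemma arcP P i j : is_arc P i j -> exists B (x y : 'I_N),
  [/\ B \in P, x \in B, y \in B, x = i :> nat & y = j :> nat] /\
  (i < j /\ forall z : 'I_N, z \in B -> i < z -> j <= z).
Proof.
case/existsP => B /andP[BP /existsP[x /andP[xB /existsP[y /andP[yB]]]]].
case/and4P => /eqP xi /eqP yj ij /forall_inP Bmin.
by exists B, x, y; split=> //; split=> // z zB; apply/implyP/Bmin.
Qed.

Lemma arc_intro P B (x y : 'I_N) : B \in P -> x \in B -> y \in B -> x < y ->
  (forall z, z \in B -> x < z -> y <= z) -> is_arc P x y.
Proof.
move=> BP xB yB xy Bmin; apply/existsP; exists B; rewrite BP /=.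
apply/existsP; exists x; rewrite xB /=; apply/existsP; exists y; rewrite yB /=.
by rewrite !eqxx xy; apply/forall_inP => z zB; apply/implyP/Bmin.
Qed.

Lemma arc_lt P i j : is_arc P i j -> i < j.
Proof. by case/arcP => B [x [y [_ []]]]. Qed.

Lemma arc_ltN P i j : is_arc P i j -> j < N.
Proof. by case/arcP => B [x [y [[_ _ _ _ <-] _]]]; exact: ltn_ord. Qed.

Lemma arc_succ P B (x y : 'I_N) : B \in P -> x \in B -> y \in B -> x < y ->
  exists z : 'I_N, is_arc P x z.
Proof.
move=> BP xB yB xy; pose above w := (w \in B) && (x < w).
have [z /andP[zB xz] zmin] := @arg_minnP _ y above val (introT andP (conj yB xy)).
by exists z; apply: arc_intro BP xB zB xz _ => w wB xw; apply: zmin; rewrite /above wB.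
Qed.

Lemma arc_pred P B (x y : 'I_N) : B \in P -> x \in B -> y \in B -> x < y ->
  exists z : 'I_N, [/\ z \in B, x <= z & is_arc P z y].
Proof.
move=> BP xB yB xy; pose below w := (w \in B) && (w < y).
have [z /andP[zB zy] zmax] := @arg_maxnP _ x below val (introT andP (conj xB xy)).
exists z; split=> //; first by apply: zmax; rewrite /below xB.
apply: arc_intro BP zB yB zy _ => w wB zw.
by rewrite leqNgt; apply: contraTN zw => wy; rewrite -leqNgt; apply: zmax; rewrite /below wB.
Qed.

Definition no_arc_from P (x : nat) := forall j, ~~ is_arc P x j.
Definition no_arc_to P (y : nat) := forall i, ~~ is_arc P i y.

Lemma two_regular_arcsP P : two_regular P <-> forall i, ~~ is_arc P i i.+1.
Proof.
split=> [/forall_inP reg i | noarc].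
  apply/negP => /arcP [B [x [y [[BP xB yB <- yx] _]]]].
  by move: (forall_inP (reg B BP) x xB) => /forall_inP /(_ y yB) /=; rewrite yx eqxx.
apply/forall_inP => B BP; apply/forall_inP => x xB; apply/forall_inP => y yB.
apply: contraNneq (noarc x) => /= yx; rewrite -yx.
by apply: arc_intro BP xB yB _ _ => [|z _]; rewrite yx.
Qed.

Lemma noncrossing_arcsP P : noncrossing P <->
  forall i j k l, is_arc P i k -> is_arc P j l -> i < j -> j < k -> k < l -> False.
Proof.
split=> [nc i j k l ik jl ij jk kl | cross].
  have lN := arc_ltN jl; have kN := ltn_trans kl lN; have jN := ltn_trans jk kN.
  have iN := ltn_trans ij jN.
  move/forallP/(_ (Ordinal iN))/forallP/(_ (Ordinal jN)): nc.
  by move/forallP/(_ (Ordinal kN))/forallP/(_ (Ordinal lN)); rewrite /= ik jl ij jk kl.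
do 4!apply/forallP => ?; apply/negP => /and5P[]; exact: cross.
Qed.

Lemma card_gt2_sorted B : 2 < #|B| ->
  exists lo mi hi : 'I_N, [/\ lo \in B, mi \in B, hi \in B & lo < mi < hi].
Proof.
case/card_gt2P => a [b [c [[aB bB cB] [ab bc ca]]]].
wlog ltab : a b aB bB ab bc ca / a < b.
  move=> sorted; case: (ltngtP a b) => [|ba|/val_inj eab]; first exact: sorted.
    by apply: (sorted b a); rewrite // eq_sym.
  by rewrite eab eqxx in ab.
case: (ltngtP c a) => [ca'|ac|/val_inj eca]; first by exists c, a, b; rewrite ca'.
  case: (ltngtP c b) => [cb|bc'|/val_inj ecb]; first by exists a, c, b; rewrite ac.
    by exists a, b, c; rewrite ltab.
  by rewrite ecb eqxx in bc.
by rewrite eca eqxx in ca.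
Qed.

Lemma eq_arcs_ord P (A : nat -> nat -> bool) :
  (forall i j, A i j -> i < j) -> (forall i j, A i j -> j < N) ->
  (forall x y : 'I_N, is_arc P x y = A x y) -> forall i j, is_arc P i j = A i j.
Proof.
move=> A_lt A_ltN eqA i j.
have [ij|ji] := ltnP i j; last by apply/idP/idP => [/arc_lt|/A_lt]; rewrite ltnNge ji.
have [jN|Nj] := ltnP j N; last by apply/idP/idP => [/arc_ltN|/A_ltN]; rewrite ltnNge Nj.
exact: eqA (Ordinal (ltn_trans ij jN)) (Ordinal jN).
Qed.

Section Partition.
Variables (D : {set 'I_N}) (P : {set {set 'I_N}}).
Hypothesis partP : partition P D.

Let tiP : trivIset P. Proof. by case/and3P: partP. Qed.
Let coverP : cover P = D. Proof. by case/and3P: partP => /eqP. Qed.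
Let pblockP x : x \in D -> pblock P x \in P.
Proof. by rewrite -coverP; apply: pblock_mem. Qed.
Let in_pblock x : x \in D -> x \in pblock P x.
Proof. by rewrite -coverP mem_pblock. Qed.
Let P0 : set0 \notin P. Proof. by case/and3P: partP. Qed.
Let blockD B x : B \in P -> x \in B -> x \in D.
Proof. by move=> BP xB; rewrite -coverP; apply/bigcupP; exists B. Qed.

Lemma arc_fun i j j' : is_arc P i j -> is_arc P i j' -> j = j'.
Proof.
case/arcP => B [x [y [[BP xB yB <- <-] [xy Bmin]]]].
case/arcP => B' [x' [y' [[BP' xB' yB' /val_inj ex' <-] [xy' Bmin']]]].
subst x'; have eB : B' = B by rewrite -(def_pblock tiP BP xB) (def_pblock tiP BP' xB').
by subst B'; apply/eqP; rewrite eqn_leq Bmin ?Bmin'.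
Qed.

Lemma arc_inj i i' j : is_arc P i j -> is_arc P i' j -> i = i'.
Proof.
case/arcP => B [x [y [[BP xB yB <- <-] [xy Bmin]]]].
case/arcP => B' [x' [y' [[BP' xB' yB' <- /val_inj ey'] [xy' Bmin']]]].
subst y'; have eB : B' = B by rewrite -(def_pblock tiP BP yB) (def_pblock tiP BP' yB').
subst B'; have := Bmin x' xB'; have := Bmin' x xB; lia.
Qed.

Lemma no_arc_fromP (x : 'I_N) : x \in D ->
  no_arc_from P x <-> {in pblock P x, forall z : 'I_N, z <= x}.
Proof.
move=> xD; have [xB BP] := (in_pblock xD, pblockP xD).
split=> [noarc z zB | Bmax j].
  by rewrite leqNgt; apply/negP => /(arc_succ BP xB zB) [j]; apply/negP.
apply/negP => /arcP [B [x' [y [[BP' xB' yB /val_inj ex <-] [xy _]]]]].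
subst x'; rewrite -(def_pblock tiP BP' xB') in yB.
by have := Bmax y yB; rewrite leqNgt xy.
Qed.

Lemma no_arc_toP (y : 'I_N) : y \in D ->
  no_arc_to P y <-> {in pblock P y, forall z : 'I_N, y <= z}.
Proof.
move=> yD; have [yB BP] := (in_pblock yD, pblockP yD).
split=> [noarc z zB | Bmin i].
  by rewrite leqNgt; apply/negP => /(arc_pred BP zB yB) [i [_ _]]; apply/negP.
apply/negP => /arcP [B [x [y' [[BP' xB yB' <- /val_inj ey] [xy _]]]]].
subst y'; rewrite -(def_pblock tiP BP' yB') in xB.
by have := Bmin x xB; rewrite leqNgt xy.
Qed.

Lemma feasible_arcsP : feasible P <->
  forall x : 'I_N, x \in D -> no_arc_from P x -> no_arc_to P x -> False.
Proof.
split=> [/forall_inP feas x xD /no_arc_fromP-/(_ xD) Bmax /no_arc_toP-/(_ xD) Bmin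
        | single].
  have /card_gt1P [a [b [aB bB]]] := feas _ (pblockP xD).
  suff [-> ->] : a = x /\ b = x by rewrite eqxx.
  by split; apply/val_inj/eqP; rewrite eqn_leq Bmax ?Bmin.
apply/forall_inP => B BP; rewrite ltnNge; apply/card_le1_eqP => Bsingle.
have /set0Pn [x xB] : B != set0 by apply: contraNneq P0 => <-.
have [xD eB] := (blockD BP xB, def_pblock tiP BP xB).
apply: (single x xD); [apply/no_arc_fromP | apply/no_arc_toP] => // z;
  by rewrite eB => zB; rewrite (Bsingle z x zB xB).
Qed.

Lemma max_min_sep_arcsP : max_min_sep P <->
  forall x y : 'I_N, x \in D -> y \in D -> y = x.+1 :> nat ->
    no_arc_from P x -> no_arc_to P y -> False.
Proof.
split=> [/forall_inP sep x y xD yD yx /(no_arc_fromP xD) Bmax /(no_arc_toP yD) Bmin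
        | sep].
  move/forall_inP/(_ _ (pblockP yD))/forall_inP/(_ x (in_pblock xD)): (sep _ (pblockP xD)).
  move/forall_inP/(_ y (in_pblock yD)); rewrite /= yx eqxx implybF => /negP; apply.
  apply/andP; split; apply/forall_inP => z zB; [exact: Bmax | rewrite -yx; exact: Bmin].
apply/forall_inP => B BP; apply/forall_inP => B' BP'.
apply/forall_inP => x xB; apply/forall_inP => y yB.
apply/implyP => /andP[/forall_inP Bmax /forall_inP Bmin]; apply/eqP => /= yx.
have [xD yD] := (blockD BP xB, blockD BP' yB).
apply: (sep x y xD yD (esym yx)); [apply/no_arc_fromP | apply/no_arc_toP] => // z.
  by rewrite (def_pblock tiP BP xB) => /Bmax.
by rewrite (def_pblock tiP BP' yB) => /Bmin.
Qed.

Lemma poor_arcsP : poor P <-> forall i j k, is_arc P i j -> is_arc P j k -> False.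
Proof.
split=> [/forall_inP pr i j k | chain].
  case/arcP => B [x [y [[BP xB yB <- <-] [xy _]]]].
  case/arcP => B' [y' [z [[BP' yB' zB /val_inj ey <-] [yz _]]]].
  subst y'; rewrite -(def_pblock tiP BP' yB') (def_pblock tiP BP yB) in zB.
  have := pr B BP; rewrite leqNgt => /negP; apply; apply/card_gt2P.
  exists x, y, z; split=> //; split; apply/negP => /eqP exy.
  - by rewrite exy ltnn in xy.
  - by rewrite exy ltnn in yz.
  - by move: (ltn_trans xy yz); rewrite exy ltnn.
apply/forall_inP => B BP; rewrite leqNgt; apply/negP.
case/card_gt2_sorted => lo [mi [hi [loB miB hiB /andP[lomi mihi]]]].
have [i [_ _ ii]] := arc_pred BP loB miB lomi; have [k kk] := arc_succ BP miB hiB mihi.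
exact: chain ii kk.
Qed.

Lemma arc_pblock (x y : 'I_N) : is_arc P x y -> y \in pblock P x.
Proof.
case/arcP => B [x' [y' [[BP xB yB /val_inj ex /val_inj ey] _]]].
by subst x' y'; rewrite (def_pblock tiP BP xB).
Qed.

End Partition.

Section TwoPartitions.
Variables (D : {set 'I_N}) (P1 P2 : {set {set 'I_N}}).
Hypotheses (partP1 : partition P1 D) (partP2 : partition P2 D).

Let tiP1 : trivIset P1. Proof. by case/and3P: partP1. Qed.
Let tiP2 : trivIset P2. Proof. by case/and3P: partP2. Qed.

(* Within a block, [y] is reached from any smaller [x] by a chain of arcs. *)
Lemma pblock_sub_arcs : (forall i j, is_arc P1 i j -> is_arc P2 i j) ->
  {in D, forall x, pblock P1 x \subset pblock P2 x}.
Proof.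
move=> sub12; have cover1 : cover P1 = D by case/and3P: partP1 => /eqP.
have cover2 : cover P2 = D by case/and3P: partP2 => /eqP.
have up x y : x \in D -> y \in pblock P1 x -> x <= y -> y \in pblock P2 x.
  move=> xD; have [s] := ubnP y; elim: s y => // s IH y ys yB.
  rewrite leq_eqVlt => /orP [/eqP/val_inj <- | xy]; first by rewrite mem_pblock cover2.
  have BP : pblock P1 x \in P1 by rewrite pblock_mem ?cover1.
  have xB : x \in pblock P1 x by rewrite mem_pblock cover1.
  have [z [zB xz zy]] := arc_pred BP xB yB xy.
  have zB2 := IH z (leq_trans (arc_lt zy) ys) zB xz.
  by rewrite -(same_pblock tiP2 zB2) (arc_pblock partP2 (sub12 _ _ zy)).
move=> x xD; apply/subsetP => y yB.
have eB := same_pblock tiP1 yB; have yD : y \in D by rewrite -cover1 -mem_pblock eB.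
have [xy | yx] := leqP x y; first exact: up.
have xB : x \in pblock P1 y by rewrite eB mem_pblock cover1.
by rewrite (same_pblock tiP2 (up y x yD xB (ltnW yx))) mem_pblock cover2.
Qed.

End TwoPartitions.
End Arcs.

Lemma eq_partition_arcs N (D : {set 'I_N}) (P1 P2 : {set {set 'I_N}}) :
  partition P1 D -> partition P2 D ->
  (forall i j, is_arc P1 i j = is_arc P2 i j) -> P1 = P2.
Proof.
move=> part1 part2 arcs12.
have eB : {in D, pblock P1 =1 pblock P2}.
  move=> x xD; apply/eqP; rewrite eqEsubset.
  by rewrite (pblock_sub_arcs part1 part2) ?(pblock_sub_arcs part2 part1) // => i j;
    rewrite arcs12.
rewrite -(preim_partition_pblock part1) -(preim_partition_pblock part2).
apply: eq_in_imset => x xD; apply/setP => y; rewrite !inE.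
by case yD: (y \in D); rewrite //= !eB.
Qed.

Section Realization.
Variables (N : nat) (A : nat -> nat -> bool).
Hypothesis A_lt : forall i j, A i j -> i < j.
Hypothesis A_fun : forall i j j', A i j -> A i j' -> j = j'.
Hypothesis A_inj : forall i i' j, A i j -> A i' j -> i = i'.

Definition chain_prev (y : 'I_N) : 'I_N := odflt y [pick x : 'I_N | A x y].

Definition chain_root (y : 'I_N) : 'I_N := iter N chain_prev y.

Lemma chain_prev_arc (x y : 'I_N) : A x y -> chain_prev y = x.
Proof.
move=> Axy; rewrite /chain_prev; case: pickP => [x' Ax'y | /(_ x)]; last by rewrite Axy.
exact/val_inj/(A_inj Ax'y Axy).
Qed.

Lemma chain_prev_id (y : 'I_N) : (forall x : 'I_N, ~~ A x y) -> chain_prev y = y.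
Proof.
by move=> none; rewrite /chain_prev; case: pickP => // x; rewrite (negbTE (none x)).
Qed.

Lemma chain_prev_le (y : 'I_N) : chain_prev y <= y.
Proof.
case: (pickP [pred x : 'I_N | A x y]) => [x /= Axy | none].
  by rewrite (chain_prev_arc Axy) ltnW ?A_lt.
by rewrite chain_prev_id // => x; apply/negbT/none.
Qed.

(* The chain of predecessors of [y] strictly decreases until it stops, so
   after [N] steps it has stopped. *)
Lemma chain_root_fix (y : 'I_N) : chain_prev (chain_root y) = chain_root y.
Proof.
suff /(_ N) : forall k, chain_prev (iter k chain_prev y) = iter k chain_prev y
                       \/ k + iter k chain_prev y <= y.
  by case=> // le_Ny; have := ltn_ord y; lia.
elim=> [|k IH]; first by right.
rewrite iterS; case: IH => [fixed|le_ky]; first by left; rewrite !fixed.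
set z := iter k chain_prev y in le_ky *.
case: (pickP [pred x : 'I_N | A x z]) => [x /= Axz | none].
  by right; rewrite (chain_prev_arc Axz); have := A_lt Axz; lia.
by left; rewrite !chain_prev_id // => x; apply/negbT/none.
Qed.

Lemma chain_root_arc (x y : 'I_N) : A x y -> chain_root x = chain_root y.
Proof.
move=> Axy; have := chain_root_fix y; rewrite /chain_root => fixed.
by rewrite -(chain_prev_arc Axy) -iterSr iterS fixed.
Qed.

Lemma chain_root_le (y : 'I_N) : chain_root y <= y.
Proof.
suff le_iter k : iter k chain_prev y <= y by apply: le_iter.
by elim: k => // k IH; rewrite iterS (leq_trans (chain_prev_le _) IH).
Qed.

Lemma chain_root_id (y : 'I_N) : (forall x : 'I_N, ~~ A x y) -> chain_root y = y.
Proof. by move/chain_prev_id; apply: iter_fix. Qed.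

(* If the predecessor [p] of [b] were below [a], the predecessor of [a] would
   lie strictly between [p] and [a], and would in turn force a second
   predecessor of [b]. *)
Lemma chain_root_prev (a b : 'I_N) : a < b -> chain_root a = chain_root b ->
  exists2 p : 'I_N, A p b & a <= p.
Proof.
have [s] := ubnP (a + b); elim: s a b => // s IH a b sab ab eab.
case: (pickP [pred p : 'I_N | A p b]) => [p /= Apb | none]; last first.
  have := chain_root_le a; rewrite eab chain_root_id => [|x]; last exact/negbT/none.
  by rewrite leqNgt ab.
have [ap|pa] := leqP a p; first by exists p.
have [|q Aqa pq] := IH p a _ pa (etrans (chain_root_arc Apb) (esym eab)); first lia.
have lt_qa := A_lt Aqa.
have [||r Arb qr] := IH q b _ _ (etrans (chain_root_arc Aqa) eab); [lia | lia |].
have ep : r = p :> nat := A_inj Arb Apb.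
have eq : q = p :> nat by rewrite -ep; lia.
by move: Aqa; rewrite eq => /(A_fun Apb) eba; rewrite eba ltnn in ab.
Qed.

Variable D : {set 'I_N}.
Hypothesis A_ltN : forall i j, A i j -> j < N.
Hypothesis A_dom : forall a b : 'I_N, A a b -> (a \in D) && (b \in D).

Lemma preim_chain_root_arc i j : is_arc (preim_partition chain_root D) i j = A i j.
Proof.
apply/idP/idP.
  case/arcP => B [x [y [[/imsetP [c cD ->] xB yB <- <-] [xy Bmin]]]].
  move: xB yB; rewrite !inE => /andP[xD /eqP cx] /andP[yD /eqP cy].
  have [p Apy xp] := chain_root_prev xy (etrans (esym cx) cy).
  case/andP: (A_dom Apy) => pD _; have py := A_lt Apy.
  suff ->: x = p :> nat by [].
  apply/eqP; rewrite eqn_leq xp /= leqNgt; apply: contraTN py => xp'.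
  by rewrite -leqNgt Bmin // inE pD cy (chain_root_arc Apy) eqxx.
move=> Aij; have [ij jN] := (A_lt Aij, A_ltN Aij).
pose a := Ordinal (ltn_trans ij jN); pose b := Ordinal jN; have Aab : A a b := Aij.
case/andP: (A_dom Aab) => aD bD.
apply: (@arc_intro _ _ [set y in D | chain_root a == chain_root y] a b) => //.
- exact: imset_f.
- by rewrite inE aD eqxx.
- by rewrite inE bD (chain_root_arc Aab) eqxx.
move=> z; rewrite inE => /andP[zD /eqP ez] az; rewrite leqNgt; apply/negP => zb.
have [p Apb zp] := chain_root_prev zb (etrans (esym ez) (chain_root_arc Aab)).
by move: (A_inj Apb Aab) zp => ->; rewrite leqNgt az.
Qed.

End Realization.

Lemma partition_of_arcs N (D : {set 'I_N}) (A : nat -> nat -> bool) :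
  (forall i j, A i j -> i < j) -> (forall i j j', A i j -> A i j' -> j = j') ->
  (forall i i' j, A i j -> A i' j -> i = i') -> (forall i j, A i j -> j < N) ->
  (forall a b : 'I_N, A a b -> (a \in D) && (b \in D)) ->
  exists2 Q, partition Q D & forall i j, is_arc Q i j = A i j.
Proof.
move=> A_lt A_fun A_inj A_ltN A_dom; exists (preim_partition (chain_root A) D).
  exact: preim_partitionP.
exact: preim_chain_root_arc.
Qed.

Lemma arc_ground_pos n (L : {set {set 'I_n.+1}}) i j :
  partition L (ground n) -> is_arc L i j -> 0 < i.
Proof.
case/and3P => /eqP coverL _ _ /arcP [B [x [y [[BP xB _ <- _] _]]]].
have : x \in cover L by apply/bigcupP; exists B.
by rewrite coverL inE.
Qed.

Section Shift.
Variables (n : nat) (L : {set {set 'I_n.+1}}).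
Hypothesis partL : partition L (ground n).

Lemma shift_spec : partition (shift L) (ground n.+1) /\
  forall i j, is_arc (shift L) i j = (0 < j) && is_arc L i j.-1.
Proof.
pose A i j := (0 < j) && is_arc L i j.-1.
have A_lt i j : A i j -> i < j by case/andP => j0 /arc_lt; lia.
have A_ltN i j : A i j -> j < n.+2 by case/andP => j0 /arc_ltN; lia.
have [Q partQ arcsQ] : exists2 Q, partition Q (ground n.+1) & forall i j, is_arc Q i j = A i j.
  apply: partition_of_arcs => // [i j j'|i i' j|a b].
  - by case/andP => j0 /(arc_fun partL) eqj /andP[j0' /eqj]; lia.
  - by case/andP => _ /(arc_inj partL) eqi /andP[_ /eqi].
  - by case/andP => b0 /(arc_ground_pos partL) a0; rewrite !inE a0.
rewrite /shift; case: pickP => [Q' /andP[partQ' /forallP arcsQ'] | /(_ Q)].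
  split=> //; apply: eq_arcs_ord => // x y.
  exact: eqP (forallP (arcsQ' x) y).
by rewrite partQ /=; move/negbT/negP; case; do 2!apply/forallP => ?; rewrite arcsQ.
Qed.

Lemma shift_partition : partition (shift L) (ground n.+1).
Proof. by case: shift_spec. Qed.

Lemma shift_arcS i j : is_arc (shift L) i j.+1 = is_arc L i j.
Proof. by case: shift_spec => _ ->. Qed.

Lemma shift_no_arc_from x : no_arc_from (shift L) x <-> no_arc_from L x.
Proof.
split=> noarc j; first by rewrite -shift_arcS.
by case: j => [|j]; [apply/negP => /arc_lt | rewrite shift_arcS].
Qed.

Lemma shift_no_arc_to y : no_arc_to (shift L) y.+1 <-> no_arc_to L y.
Proof. by split=> noarc i; have := noarc i; rewrite shift_arcS. Qed.

Lemma shift_two_regular : two_regular (shift L).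
Proof.
by apply/two_regular_arcsP => i; rewrite shift_arcS; apply/negP => /arc_lt; rewrite ltnn.
Qed.

End Shift.

Lemma shift_onto n (La : {set {set 'I_n.+2}}) :
  partition La (ground n.+1) -> two_regular La ->
  exists2 L, partition L (ground n) & shift L = La.
Proof.
move=> partLa /two_regular_arcsP reg.
pose A i j := is_arc La i j.+1.
have A_lt i j : A i j -> i < j.
  move=> Aij; have := arc_lt Aij; rewrite ltnS leq_eqVlt => /orP[/eqP eij|//].
  by move: Aij; rewrite /A -eij (negbTE (reg i)).
have [L partL arcsL] : exists2 L, partition L (ground n) & forall i j, is_arc L i j = A i j.
  apply: partition_of_arcs => [//|i j j'|i i' j|i j|a b Aab]; rewrite ?/A.
  - by move/(arc_fun partLa) => eqj /eqj [].
  - by move=> a1 /(arc_inj partLa a1).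
  - by move/arc_ltN.
  - have a0 := arc_ground_pos partLa Aab; have := A_lt _ _ Aab.
    by rewrite !inE a0; apply: leq_trans.
exists L => //; apply: eq_partition_arcs (shift_partition partL) partLa _ => i [|j].
  by apply/idP/idP => /arc_lt.
by rewrite (shift_arcS partL) arcsL.
Qed.

Lemma shift_inj n : {in set_partitions n &, injective (@shift n)}.
Proof.
move=> L1 L2; rewrite !inE => part1 part2 eqS; apply: (eq_partition_arcs part1 part2).
by move=> i j; rewrite -(shift_arcS part1) -(shift_arcS part2) eqS.
Qed.

Section ShiftProperties.
Variables (n : nat) (L : {set {set 'I_n.+1}}).
Hypothesis partL : partition L (ground n).

Lemma max_min_sep_shift : max_min_sep (shift L) = feasible L.
Proof.
have partS := shift_partition partL.
apply/idP/idP => [/(max_min_sep_arcsP partS) sep | /(feasible_arcsP partL) single].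
  apply/(feasible_arcsP partL) => x xD /(shift_no_arc_from partL) from_x.
  move/(shift_no_arc_to partL) => to_x1; have x0 : 0 < x by rewrite inE in xD.
  pose x' := widen_ord (leqnSn _) x; pose y := Ordinal (ltn_ord x : x.+1 < n.+2).
  by apply: (sep x' y) from_x to_x1; rewrite ?inE.
apply/(max_min_sep_arcsP partS) => x y xD _ yx /(shift_no_arc_from partL) from_x.
have xn : x < n.+1 by rewrite -ltnS -yx.
rewrite yx => /(shift_no_arc_to partL); apply: (single (Ordinal xn)) => //.
by move: xD; rewrite !inE.
Qed.

Lemma noncrossing_shift : noncrossing (shift L) = poor L && noncrossing L.
Proof.
apply/idP/idP => [/noncrossing_arcsP cross | /andP[/(poor_arcsP partL) chain]].
  apply/andP; split.
    apply/(poor_arcsP partL) => i j k ij jk; apply: (cross i j j.+1 k.+1).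
    all: rewrite ?(shift_arcS partL) ?ltnS ?(arc_lt ij) ?(arc_lt jk) //.
  apply/noncrossing_arcsP => i j k l ik jl ij jk kl; apply: (cross i j k.+1 l.+1).
  all: rewrite ?(shift_arcS partL) ?ltnS ?(ltnW jk) //.
move/noncrossing_arcsP => cross; apply/noncrossing_arcsP => i j [|k] [|l] //;
  try by move=> _ /arc_lt.
rewrite !(shift_arcS partL) ltnS => ik jl ij jk kl.
case: (ltngtP j k) => [{}jk | kj | ejk]; first exact: cross ik jl ij jk kl.
  by rewrite leqNgt kj in jk.
by rewrite ejk in jl; exact: chain ik jl.
Qed.

End ShiftProperties.

Lemma shift_image n (p : pred {set {set 'I_n.+1}}) (q : pred {set {set 'I_n.+2}}) :
  (forall L, partition L (ground n) -> q (shift L) = p L) ->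
  shift (n:=n) @: [set L in set_partitions n | p L]
    = [set La in set_partitions n.+1 | two_regular La && q La].
Proof.
move=> qp; apply/setP => La; apply/imsetP/idP.
  case=> L; rewrite !inE => /andP[partL pL] ->.
  by rewrite shift_partition // shift_two_regular // qp.
rewrite !inE => /and3P[partLa reg qLa]; have [L partL eLa] := shift_onto partLa reg.
by exists L; rewrite // !inE partL -qp // eLa.
Qed.

Theorem lemma3p1 (n : nat) :
  (shift (n:=n) @: [set L in set_partitions n | feasible L]
     = [set L in set_partitions n.+1 | two_regular L && max_min_sep L]
   /\ {in [set L in set_partitions n | feasible L] &, injective (@shift n)})
  /\
  (shift (n:=n) @: [set L in set_partitions n | poor L && noncrossing L]
     = [set L in set_partitions n.+1 | two_regular L && noncrossing L]
   /\ {in [set L in set_partitions n | poor L && noncrossing L] &, injective (@shift n)}).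
Proof.
have inj_on (p : pred {set {set 'I_n.+1}}) :
    {in [set L in set_partitions n | p L] &, injective (@shift n)}.
  by apply: sub_in2 (@shift_inj n) => L; rewrite inE => /andP[].
split; split; try exact: inj_on.
  by apply: shift_image; exact: max_min_sep_shift.
by apply: shift_image; exact: noncrossing_shift.
Qed.
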